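(* Let $\mathbb{V}$ be a finitary variety of algebras which has 2-fold subobject decompositions over the countably infinite set $\mathbb{N}$. Then $\mathbb{V}$ is trivial, i.e. every algebra in $\mathbb{V}$ has at most one element.
   Context: A variety of algebras (as a category, it is regular) has 2-fold subobject decompositions over $\mathbb{N}$ if for every family $(A_n)_{n\in\mathbb{N}}$ of algebras in $\mathbb{V}$ and any two subalgebras $S,T$ of $\prod_{n\in\mathbb{N}}A_n$: if for all $i\neq j$ in $\mathbb{N}$ the images of $S$ and $T$ under the projection $\prod_n A_n\to A_i\times A_j$ coincide, then $S=T$. Finitary means all basic operations have finite arity. *)

From mathcomp Require Import all_boot.
Set Implicit Arguments. Unset Strict Implicit. Unset Printing Implicit Defensive.

Record signature := Signature {
  op_sym : Type;
  arity : op_sym -> nat }.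

Record algebra (sigma : signature) := Algebra {
  carrier :> Type;
  interp : forall o : op_sym sigma, ('I_(arity o) -> carrier) -> carrier }.

Inductive term (sigma : signature) : Type :=
  | Var : nat -> term sigma
  | App : forall o : op_sym sigma, ('I_(arity o) -> term sigma) -> term sigma.

Fixpoint eval (sigma : signature) (A : algebra sigma) (v : nat -> A)
  (t : term sigma) : A :=
  match t with
  | Var n => v n
  | App o args => @interp sigma A o (fun i => eval v (args i))
  end.

Definition identities (sigma : signature) := term sigma -> term sigma -> Prop.

Definition in_variety (sigma : signature) (E : identities sigma)
  (A : algebra sigma) : Prop :=
  forall s t, E s t -> forall v : nat -> A, eval v s = eval v t.

Definition is_subalgebra (sigma : signature) (A : algebra sigma)
  (S : A -> Prop) : Prop :=
  forall (o : op_sym sigma) (args : 'I_(arity o) -> A),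
    (forall i, S (args i)) -> S (@interp sigma A o args).

Definition prod_alg (sigma : signature) (A : nat -> algebra sigma)
  : algebra sigma :=
  @Algebra sigma (forall n, A n)
    (fun o args => fun n => @interp sigma (A n) o (fun i => args i n)).

Definition proj2_image (sigma : signature) (A : nat -> algebra sigma)
  (S : prod_alg A -> Prop) (i j : nat) : A i * A j -> Prop :=
  fun p => exists x : prod_alg A, S x /\ (x i, x j) = p.

Definition has_2fold_decomp (sigma : signature) (E : identities sigma) : Prop :=
  forall (A : nat -> algebra sigma), (forall n, in_variety E (A n)) ->
  forall S T : prod_alg A -> Prop,
    is_subalgebra S -> is_subalgebra T ->
    (forall i j : nat, i <> j ->
       forall p, @proj2_image sigma A S i j p <-> @proj2_image sigma A T i j p) ->
    forall x, S x <-> T x.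

(* In any algebra A of the variety, the eventually constant sequences form a
   subalgebra of A^N: an operation has finitely many arguments, and beyond the
   largest of their stabilisation points its value is constant as well.  This
   subalgebra has the same two-coordinate projections as A^N itself, since any
   pair (a, b) at coordinates i <> j is realised by the sequence equal to b at j
   and to a elsewhere.  A 2-fold decomposition therefore makes every sequence
   eventually constant, which for the alternating sequence x, y, x, y, ... means
   x = y. *)

From Stdlib Require Import FunctionalExtensionality.
From mathcomp Require Import all_boot.

Set Implicit Arguments.
Unset Strict Implicit.
Unset Printing Implicit Defensive.

Definition eventually_const (T : Type) (f : nat -> T) : Prop :=
  exists N, forall n, N <= n -> f n = f N.

Lemma eventually_forall_fin (I : finType) (P : I -> nat -> Prop) :
  (forall i, exists N, forall n, N <= n -> P i n) ->
  exists N, forall i n, N <= n -> P i n.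
Proof.
move=> evP.
suff [N HN] : exists N, forall i, i \in enum I -> forall n, N <= n -> P i n.
  by exists N => i; apply: HN; rewrite mem_enum.
elim: (enum I) => [|i s [N HN]]; first by exists 0.
have [Ni HNi] := evP i.
exists (maxn Ni N) => j; rewrite inE => /predU1P[-> | js] n.
  by rewrite geq_max => /andP[+ _]; apply: HNi.
by rewrite geq_max => /andP[_]; apply: HN.
Qed.

Lemma eventually_const_fin_family (I : finType) (T : Type) (f : I -> nat -> T) :
  (forall i, eventually_const (f i)) -> eventually_const (fun n i => f i n).
Proof.
move=> evf.
have [N HN] : exists N, forall i n, N <= n ->
    forall m, n <= m -> f i m = f i n.
  apply: eventually_forall_fin => i.
  have [Ni HNi] := evf i.
  exists Ni => n le_Ni_n m le_n_m.
  by rewrite HNi ?(leq_trans le_Ni_n) // HNi.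
exists N => n le_N_n; apply: functional_extensionality => i.
exact: HN.
Qed.

Lemma eventually_const_subalgebra (sigma : signature) (A : algebra sigma) :
  is_subalgebra (A := prod_alg (fun _ => A)) (@eventually_const A).
Proof.
move=> o args ev_args.
have [N HN] := eventually_const_fin_family ev_args.
by exists N => n le_N_n /=; rewrite (HN n le_N_n).
Qed.

Lemma proj2_image_eventually_const (sigma : signature) (A : algebra sigma)
    (i j : nat) (p : A * A) :
  i <> j -> @proj2_image sigma (fun _ => A) (@eventually_const A) i j p.
Proof.
move=> /eqP neq_ij.
exists (fun n => if n == j then p.2 else p.1); split.
  exists j.+1 => n lt_j_n.
  by rewrite (gtn_eqF lt_j_n) (gtn_eqF (ltnSn j)).
by rewrite (negbTE neq_ij) eqxx; case: p.
Qed.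

Lemma alternating_eventually_const (T : Type) (x y : T) :
  eventually_const (fun n => if odd n then x else y) -> x = y.
Proof.
move=> [N HN]; have := HN N.+1 (leqnSn N).
by rewrite /=; case: (odd N).
Qed.

Theorem proposition4p9 (sigma : signature) (E : identities sigma) :
  has_2fold_decomp E ->
  forall A : algebra sigma, in_variety E A -> forall x y : A, x = y.
Proof.
move=> decomp A inE_A x y.
have all_eventually_const (f : nat -> A) : eventually_const f.
  apply/(decomp (fun _ => A) (fun _ => inE_A) _ (fun _ => True)) => //.
  - exact: eventually_const_subalgebra.
  - move=> i j neq_ij p; split=> [[g [_ <-]] | _]; first by exists g.
    exact: proj2_image_eventually_const.
exact/alternating_eventually_const/all_eventually_const.
Qed.
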